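(* Let $K$ be a hexagonal trefoil knot with vertices $v_1,\dots,v_6$ and let $\hat K$ be its quadrisecant approximation. If $\hat K$ has a new quadrisecant of type-1 or type-2, then this quadrisecant lies in at least one of the planes $P_1,\dots,P_6$.
   Context: A knot is a locally flat simple closed curve in $\mathbb R^3$; a polygonal knot is a union of finitely many straight segments, whose maximal segments are edges. A hexagonal trefoil knot is a polygonal knot with exactly six edges having the knot type of the trefoil. Label its vertices cyclically $v_1,\dots,v_6$ (indices mod 6), with edges $e_{i\,i+1}=\overline{v_iv_{i+1}}$, and let $P_i$ be the plane through $v_{i-1},v_i,v_{i+1}$. A quadrisecant of a knot or closed polygonal curve $C$ is a straight line $L$ such that $C\cap L$ has at least four connected components. The quadrisecant approximation $\hat K$ is obtained by marking all intersection points of $K$ with its (finitely many) quadrisecants and replacing each subarc of $K$ between consecutive marked points by the straight segment joining them. Each edge $e_{i\,i+1}$ contains exactly two marked points, and $\hat K$ has twelve edges: $O_i$, the segment of $e_{i\,i+1}$ between its two marked points, and $N_i$, the segment joining $O_{i-1}$ and $O_i$ (joining the marked point of $e_{i-1\,i}$ nearest $v_i$ to the marked point of $e_{i\,i+1}$ nearest $v_i$). A new quadrisecant of $\hat K$ is a quadrisecant of $\hat K$ that is not a quadrisecant of $K$. A quadrisecant $L$ of $\hat K$ is of type-$k$ if there are four distinct points of $L\cap\hat K$ lying on four distinct edges of $\hat K$ such that exactly $k$ pairs among these four edges are adjacent (share a vertex); a quadrisecant through vertices may have more than one type. *)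

From HB Require Import structures.
From mathcomp Require Import all_boot all_order all_algebra.
From mathcomp Require Import all_classical all_reals all_analysis.
Import Order.TTheory GRing.Theory Num.Theory.
Import numFieldNormedType.Exports.

Set Implicit Arguments.
Unset Strict Implicit.
Unset Printing Implicit Defensive.

Local Open Scope ring_scope.
Local Open Scope classical_set_scope.

Section Defs.
Variable R : realType.
Notation pt := 'rV[R]_3.

Definition mkpt (x y z : R) : pt := \row_(i < 3) [:: x; y; z]`_i.

Definition seg (p q : pt) : set pt :=
  [set x | exists t : R, 0 <= t <= 1 /\ x = (1 - t) *: p + t *: q].

Definition is_line (L : set pt) : Prop :=
  exists p d : pt, d != 0 /\ L = [set x | exists t : R, x = p + t *: d].

Definition collinear (p q r : pt) : Prop :=
  exists L, is_line L /\ L p /\ L q /\ L r.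

Definition plane_through (p q r : pt) : set pt :=
  [set x | exists s t : R, x = p + s *: (q - p) + t *: (r - p)].

Definition quadrisecant (C L : set pt) : Prop :=
  is_line L /\
  exists x : 'I_4 -> pt,
    (forall i, (C `&` L) (x i)) /\
    (forall i j, i != j ->
       connected_component (C `&` L) (x i) <> connected_component (C `&` L) (x j)).

Definition ambient_isotopic (A B : set pt) : Prop :=
  exists H : R -> pt -> pt,
    {within [set p : R * pt | 0 <= p.1 <= 1], continuous (fun p => H p.1 p.2)} /\
    (forall t, 0 <= t <= 1 ->
       exists G : pt -> pt, cancel (H t) G /\ cancel G (H t) /\ continuous G) /\
    (forall x, H 0 x = x) /\
    H 1 @` A = B.

(* standard trefoil: the (2,3) torus knot, and its mirror image *)
Definition std_trefoil : set pt :=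
  [set mkpt ((2 + cos (3 * t)) * cos (2 * t))
            ((2 + cos (3 * t)) * sin (2 * t))
            (sin (3 * t)) | t in [set: R]].

Definition mirror_trefoil : set pt :=
  [set mkpt ((2 + cos (3 * t)) * cos (2 * t))
            ((2 + cos (3 * t)) * sin (2 * t))
            (- sin (3 * t)) | t in [set: R]].

Definition has_trefoil_type (K : set pt) : Prop :=
  ambient_isotopic K std_trefoil \/ ambient_isotopic K mirror_trefoil.

Definition hedge6 (v : 'I_6 -> pt) (i : 'I_6) : set pt := seg (v i) (v (ordS i)).

Definition hexagon (v : 'I_6 -> pt) : set pt :=
  \bigcup_(i in [set: 'I_6]) hedge6 v i.

Definition Pplane (v : 'I_6 -> pt) (i : 'I_6) : set pt :=
  plane_through (v (ord_pred i)) (v i) (v (ordS i)).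

(* hexagonal trefoil knot: six edges (consecutive vertices non-collinear, so
   the six segments are the maximal ones), simple closed polygon, knot type
   of the trefoil *)
Definition hexagonal_trefoil (v : 'I_6 -> pt) : Prop :=
  (forall i, ~ collinear (v (ord_pred i)) (v i) (v (ordS i))) /\
  (forall i j, i != j -> forall x, hedge6 v i x -> hedge6 v j x ->
      (j = ordS i /\ x = v (ordS i)) \/ (i = ordS j /\ x = v i)) /\
  has_trefoil_type (hexagon v).

Definition marked (K : set pt) (x : pt) : Prop :=
  K x /\ exists L, quadrisecant K L /\ L x.

(* edges of the quadrisecant approximation, given the marked points
   a i (nearest v_i) and b i (nearest v_{i+1}) on edge e_{i,i+1}:
   (false, i) is O_i = [a_i, b_i], (true, i) is N_i = [b_{i-1}, a_i]. *)
Definition hatedge (a b : 'I_6 -> pt) (e : bool * 'I_6) : set pt :=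
  if e.1 then seg (b (ord_pred e.2)) (a e.2) else seg (a e.2) (b e.2).

Definition hatK (a b : 'I_6 -> pt) : set pt :=
  \bigcup_(e in [set: bool * 'I_6]) hatedge a b e.

(* adjacency (sharing a vertex) of edges of hat K:
   O_i shares a_i with N_i and b_i with N_{i+1}. *)
Definition hadj (e f : bool * 'I_6) : bool :=
  match e, f with
  | (false, i), (true, j) => (j == i) || (j == ordS i)
  | (true, j), (false, i) => (j == i) || (j == ordS i)
  | _, _ => false
  end.

Definition quad_type (a b : 'I_6 -> pt) (k : nat) (L : set pt) : Prop :=
  exists (p : 'I_4 -> pt) (e : 'I_4 -> bool * 'I_6),
    injective p /\ injective e /\
    (forall i, L (p i) /\ hatedge a b (e i) (p i)) /\
    (\sum_(i < 4) \sum_(j < 4 | (i < j)%N) (hadj (e i) (e j) : nat))%N = k.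

Definition new_quadrisecant (v a b : 'I_6 -> pt) (L : set pt) : Prop :=
  quadrisecant (hatK a b) L /\ ~ quadrisecant (hexagon v) L.

End Defs.

From HB Require Import structures.
From mathcomp Require Import all_boot all_order all_algebra.
From mathcomp Require Import all_classical all_reals all_analysis.
From mathcomp Require Import ring.
Import Order.TTheory GRing.Theory Num.Theory.
Import numFieldNormedType.Exports.
Local Open Scope ring_scope.
Local Open Scope classical_set_scope.

(* A quadrisecant of type 1 or 2 meets two adjacent edges of hat K in two
   distinct points.  Two adjacent edges of hat K are O_i together with N_i or
   N_(i+1), and both lie in the plane P_i, resp. P_(i+1), because their
   endpoints are marked points on the two edges of K through v_i, resp.
   v_(i+1).  A line through two distinct points of a plane lies in it. *)

Section PlaneThrough.
Context {R : realType}.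
Notation pt := 'rV[R]_3.

Lemma plane_through_lerp (u w z x y : pt) (s : R) :
  plane_through u w z x -> plane_through u w z y ->
  plane_through u w z ((1 - s) *: x + s *: y).
Proof.
move=> [s1 [t1 ->]] [s2 [t2 ->]].
exists ((1 - s) * s1 + s * s2), ((1 - s) * t1 + s * t2).
by apply/rowP => k; rewrite !mxE; ring.
Qed.

Lemma mem_plane_through1 (u w z : pt) : plane_through u w z u.
Proof. by exists 0, 0; rewrite !scale0r !addr0. Qed.

Lemma mem_plane_through2 (u w z : pt) : plane_through u w z w.
Proof. by exists 1, 0; apply/rowP => k; rewrite !mxE; ring. Qed.

Lemma mem_plane_through3 (u w z : pt) : plane_through u w z z.
Proof. by exists 0, 1; apply/rowP => k; rewrite !mxE; ring. Qed.

Lemma seg_sub_plane_through (u w z x y : pt) :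
  plane_through u w z x -> plane_through u w z y ->
  seg x y `<=` plane_through u w z.
Proof. by move=> hx hy _ [t [_ ->]]; apply: plane_through_lerp. Qed.

Lemma line_sub_plane_through {u w z p q : pt} {L : set pt} :
  is_line L -> L p -> L q -> p != q ->
  plane_through u w z p -> plane_through u w z q ->
  L `<=` plane_through u w z.
Proof.
move=> [p0 [d [_ ->]]] [tp def_p] [tq def_q] pq hp hq _ [t ->].
have tqp_neq0 : tq - tp != 0.
  by rewrite subr_eq0; apply: contra_neq pq => tqp; rewrite def_p def_q tqp.
have -> : p0 + t *: d =
    (1 - (t - tp) / (tq - tp)) *: p + ((t - tp) / (tq - tp)) *: q.
  by rewrite def_p def_q; apply/rowP => k; rewrite !mxE; field.
exact: plane_through_lerp.
Qed.

End PlaneThrough.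

Section HatEdges.
Context {R : realType} {v a b : 'I_6 -> 'rV[R]_3}.
Hypothesis ab_on_edge : forall i, hedge6 v i (a i) /\ hedge6 v i (b i).

Lemma hedge6_sub_Pplane {i j : 'I_6} :
  (j == i) || (j == ordS i) -> hedge6 v i `<=` Pplane v j.
Proof.
case/orP=> /eqP ->; rewrite /Pplane ?ordSK; apply: seg_sub_plane_through.
- exact: mem_plane_through2.
- exact: mem_plane_through3.
- exact: mem_plane_through1.
- exact: mem_plane_through2.
Qed.

Lemma hatedgeO_sub_Pplane (i j : 'I_6) :
  (j == i) || (j == ordS i) -> hatedge a b (false, i) `<=` Pplane v j.
Proof.
move=> ij; have sub_j := hedge6_sub_Pplane ij.
by apply: seg_sub_plane_through; apply: sub_j; case: (ab_on_edge i).
Qed.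

Lemma hatedgeN_sub_Pplane (j : 'I_6) : hatedge a b (true, j) `<=` Pplane v j.
Proof.
apply: seg_sub_plane_through.
- have j_next : (j == ord_pred j) || (j == ordS (ord_pred j)).
    by rewrite ord_predK eqxx orbT.
  by apply: (hedge6_sub_Pplane j_next); case: (ab_on_edge (ord_pred j)).
- by apply: (@hedge6_sub_Pplane j j); [rewrite eqxx | case: (ab_on_edge j)].
Qed.

Lemma hadj_sub_Pplane {e f : bool * 'I_6} : hadj e f ->
  exists k, hatedge a b e `<=` Pplane v k /\ hatedge a b f `<=` Pplane v k.
Proof.
case: e f => [[] i] [[] j] //= ij; [exists i | exists j]; split;
  by [apply: hatedgeN_sub_Pplane | apply: hatedgeO_sub_Pplane].
Qed.

Lemma quad_type_hadj (k : nat) (L : set 'rV[R]_3) :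
  (0 < k)%N -> quad_type a b k L ->
  exists e f p q, [/\ hadj e f, p != q, L p /\ L q &
                      hatedge a b e p /\ hatedge a b f q].
Proof.
move=> k_gt0 [p [e [p_inj [_ [Lpe sum_k]]]]].
move: k_gt0; rewrite -sum_k lt0n sum_nat_eq0 => /forallPn [i] /=.
rewrite sum_nat_eq0 => /forallPn [j] /=; rewrite negb_imply eqb0 negbK.
move=> /andP [lt_ij adj_ij].
have [Lpi epi] := Lpe i; have [Lpj epj] := Lpe j.
exists (e i), (e j), (p i), (p j); split=> //.
by rewrite (inj_eq p_inj) neq_ltn lt_ij.
Qed.

End HatEdges.

Theorem lemma8 (R : realType) (v a b : 'I_6 -> 'rV[R]_3) :
  hexagonal_trefoil v ->
  (forall i : 'I_6,
     [set x | hedge6 v i x /\ marked (hexagon v) x] = [set a i; b i] /\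
     a i != b i /\ `|a i - v i| < `|b i - v i|) ->
  forall L : set 'rV[R]_3,
    new_quadrisecant v a b L ->
    quad_type a b 1 L \/ quad_type a b 2 L ->
    exists i : 'I_6, L `<=` Pplane v i.
Proof.
move=> _ marked_ab L [[L_line _] _] type12.
have ab_on_edge i : hedge6 v i (a i) /\ hedge6 v i (b i).
  have [marked_i _] := marked_ab i.
  have [ai bi] : [set a i; b i] (a i) /\ [set a i; b i] (b i) by split; [left|right].
  by rewrite -marked_i in ai bi; case: ai; case: bi.
have [e [f [p [q [ef_adj pq [Lp Lq] [ep fq]]]]]] :
    exists e f p q, [/\ hadj e f, p != q, L p /\ L q &
                        hatedge a b e p /\ hatedge a b f q].
  by case: type12; apply: quad_type_hadj.
have [k [ek fk]] := hadj_sub_Pplane ab_on_edge ef_adj.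
by exists k; exact: (line_sub_plane_through L_line Lp Lq pq (ek _ ep) (fk _ fq)).
Qed.
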